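(* Let $A$ be an abelian group of order $n$ and exponent greater than $2$, let $m$ be the number of elements of $A$ of order at most $2$, and let $\iota:A\to A$ be the automorphism $x\mapsto x^{-1}$. Then the number of inverse-closed subsets $S\subseteq A$ such that $\varphi(S)=S$ for some $\varphi\in\mathrm{Aut}(A)\setminus\{1,\iota\}$ is at most $2^{m/2+11n/24+(\log_2 n)^2}$.
   Context: A subset $S$ of a group is inverse-closed if $S^{-1}=S$. *)

From HB Require Import structures.
From mathcomp Require Import all_boot all_fingroup all_solvable.
From Stdlib Require Import Reals.
Set Implicit Arguments. Unset Strict Implicit. Unset Printing Implicit Defensive.
Local Open Scope group_scope.

Definition num_ord_le2 (gT : finGroupType) (A : {set gT}) : nat :=
  #|[set x in A | #[x] <= 2]|%N.

(* The inversion automorphism iota of A, x |-> x^-1 (identity outside A, as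
   all elements of Aut A are permutations of gT supported on A). *)
Definition inv_perm_on (gT : finGroupType) (A : {set gT}) (phi : {perm gT}) : bool :=
  [forall x in A, phi x == x^-1].

Definition special_sets (gT : finGroupType) (A : {set gT}) : {set {set gT}} :=
  [set S : {set gT} | [&& S \subset A, S^-1 == S &
     [exists phi in Aut A, [&& phi != 1, ~~ inv_perm_on A phi & phi @: S == S]]]].

Definition log2 (x : R) : R := (ln x / ln 2)%R.

(* Fix such a p and let e relate x to p x, p^-1 x and x^-1.  A subset S of A
   with S^-1 = S and p(S) = S is a union of e-components, so there are at most
   2^t such sets, t the number of components inside A (card_closed_subsets).
   To bound t, give x weight 4 if it has order at most 2 and is fixed by p,
   weight 1 if it has order > 2 and is neither fixed nor inverted by p (a
   "generic" point), and weight 2 otherwise: every component K of j contains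
   j, j^-1, p j, (p j)^-1, whence |K| * weight >= 4 (weight_orbit),
   i.e. 4 t <= sum of weights (reps_weighted_count).  The fixed and inverted
   subgroups are proper, so their union has at most 3n/4 elements, and
   summing weights yields 16 t <= 7n + 8m (card_reps_le).

   Summing over p: A is generated by k elements with 2^k <= n, so
   |Aut A| <= n^k (small_generating_set, card_Aut_generated), and the total is
   at most n^k 2^t <= 2^(m/2 + 11n/24 + (log2 n)^2) (numeric_bound). *)
From HB Require Import structures.
From mathcomp Require Import all_boot all_fingroup all_solvable zify.
From Stdlib Require Import Reals Lra.
(* Reals shadows ssrnat's [^] on nat and fingroup's [morph1]; restore them. *)
From mathcomp Require Import ssrnat morphism.
Set Implicit Arguments. Unset Strict Implicit. Unset Printing Implicit Defensive.
Local Open Scope group_scope.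

Lemma card_bigcup_le (T I : finType) (P : pred I) (F : I -> {set T}) :
  (#|\bigcup_(i | P i) F i| <= \sum_(i | P i) #|F i|)%N.
Proof.
apply: (big_ind2 (fun (X : {set T}) n => #|X| <= n)%N) => //; first by rewrite cards0.
by move=> X a Y b hX hY; apply: leq_trans (leq_add hX hY); apply: leq_card_setU.
Qed.

Lemma sum_indicator (T : finType) (A X : {set T}) :
  X \subset A -> (\sum_(x in A) (x \in X) = #|X|)%N.
Proof.
move=> sXA; rewrite -sum1_card !(big_mkcond (fun x => x \in _)) /=.
apply: eq_bigr => x _.
by case: (boolP (x \in X)) => [/(subsetP sXA)->|_]; rewrite ?if_same.
Qed.

Lemma uniq_size_le_card (T : finType) (s : seq T) (K : {set T}) :
  uniq s -> {subset s <= K} -> (size s <= #|K|)%N.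
Proof. by move=> us sK; rewrite -(card_uniqP us); apply/subset_leq_card/subsetP. Qed.

Section ClosedSubsets.
Variables (T : finType) (e : rel T).
Hypothesis e_sym : connect_sym e.

Definition reps (A : {set T}) : {set T} := [set x in A | root e x == x].

Lemma root_reps (A : {set T}) x : closed e A -> x \in A -> root e x \in reps A.
Proof.
move=> clA xA; rewrite inE (root_root e_sym) eqxx andbT.
by rewrite -(closed_connect clA (connect_root e x)).
Qed.

(* An e-closed subset of A is determined by which roots it contains, so a
   family of such subsets has at most 2^(number of components) members. *)
Lemma card_closed_subsets (A : {set T}) (F : {set {set T}}) :
  closed e A -> (forall S, S \in F -> S \subset A /\ closed e S) ->
  (#|F| <= 2 ^ #|reps A|)%N.
Proof.
move=> clA sF; rewrite -card_powerset.
have recover S : S \in F -> S = [set x in A | root e x \in S :&: reps A].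
  move=> /sF[sSA clS]; apply/setP=> x; rewrite inE in_setI.
  have [xA|xA] /= := boolP (x \in A); last first.
    by apply/negbTE; apply: contra xA; apply: (subsetP sSA).
  by rewrite root_reps // andbT -(closed_connect clS (connect_root e x)).
rewrite -[#|F|](card_in_imset (f := fun S => S :&: reps A)) => [|S1 S2 F1 F2 /= E].
  apply: subset_leq_card; apply/subsetP => _ /imsetP[S _ ->].
  by rewrite powersetE subsetIr.
by rewrite (recover _ F1) (recover _ F2) E.
Qed.

Lemma reps_weighted_count (A : {set T}) (w : T -> nat) (c : nat) :
  closed e A -> (forall x y, connect e x y -> w x = w y) ->
  (forall j, j \in A -> c <= #|[set y | connect e j y]| * w j)%N ->
  (c * #|reps A| <= \sum_(x in A) w x)%N.
Proof.
move=> clA wE cj.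
rewrite (partition_big (root e) (mem (reps A))) => [|x xA]; last exact: root_reps.
rewrite mulnC -sum_nat_const; apply: leq_sum => j; rewrite inE => /andP[jA /eqP rj].
have comp : [set y | connect e j y] =i [pred y | (y \in A) && (root e y == j)].
  move=> y; rewrite !inE -{2}rj (root_connect e_sym) e_sym andb_idl //.
  by move/(closed_connect clA)->.
rewrite (eq_bigr (fun=> w j)) => [|y /andP[_ /eqP ry]]; last first.
  by apply: wE; rewrite -(root_connect e_sym) ry rj.
by rewrite sum_nat_const -(eq_card comp) cj.
Qed.

End ClosedSubsets.

Section SubgroupCounting.
Variable gT : finGroupType.
Implicit Types G H K : {group gT}.

Lemma card_proper_subgroup G H : H \proper G -> (2 * #|H| <= #|G|)%N.
Proof.
case/andP=> sHG nsGH; rewrite -(Lagrange sHG) mulnC leq_mul2l.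
by rewrite indexg_gt1 nsGH orbT.
Qed.

(* Two proper subgroups cover at most three quarters of the group: with
   h, k <= n/2 and |H :&: K| >= hk/n, |H :|: K| <= h + k - hk/n <= 3n/4. *)
Lemma card_union_proper_subgroups G H K :
  H \proper G -> K \proper G -> (4 * #|H :|: K| <= 3 * #|G|)%N.
Proof.
move=> pHG pKG; have hH := card_proper_subgroup pHG.
have hK := card_proper_subgroup pKG.
have sHKG : (#|(H * K)%g| <= #|G|)%N.
  by apply: subset_leq_card; rewrite mulG_subG !proper_sub.
have UI := cardsUI H K; have MC := mul_cardG H K.
have MI : (#|(H * K)%g| * #|H :&: K| <= #|G| * #|H :&: K|)%N.
  by rewrite leq_mul2r sHKG orbT.
rewrite -(leq_pmul2l (cardG_gt0 G)).
move: #|(H * K)%g| #|H :&: K| #|H :|: K| #|H| #|K| #|G| UI MC MI hH hK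
  => m i u h k n UI MC MI hH hK.
(* Certificate for nia: 3n^2 - 4n(h + k) + 4hk
   = (n - 2h)(n - 2k) + n(n - 2h) + n(n - 2k). *)
have : (0 <= (n - 2 * h) * (n - 2 * k))%N by [].
nia.
Qed.

Lemma equalizer_group_set (rT : finGroupType) (D : {group gT})
    (f g : {morphism D >-> rT}) :
  group_set [set x in D | f x == g x].
Proof.
apply/group_setP; split; first by rewrite inE group1 (morph1 f) (morph1 g) eqxx.
move=> x y; rewrite !inE => /andP[Dx /eqP fgx] /andP[Dy /eqP fgy].
by rewrite groupM // (morphM f) // (morphM g) // fgx fgy eqxx.
Qed.

(* Every group G has a generating set B with 2^|B| <= |G|: take B maximizing
   |<<B>>| among those with 2^|B| <= |<<B>>|; adding a missing element would at
   least double <<B>>. *)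
Lemma small_generating_set G :
  exists B : {set gT}, [/\ B \subset G, <<B>> = G & (2 ^ #|B| <= #|G|)%N].
Proof.
pose P (B : {set gT}) := (B \subset G) && (2 ^ #|B| <= #|<<B>>|)%N.
have P0 : P set0 by rewrite /P sub0set gen0 cards0 cards1.
case: (arg_maxnP (fun B => #|<<B>>|) P0) => B /andP[sBG hB] maxB.
have sgG : <<B>> \subset G by rewrite gen_subG.
suff gBG : <<B>> = G by exists B; rewrite -[in #|G|]gBG.
apply/eqP; rewrite eqEsubset sgG /=; apply/subsetP=> x xG.
apply: contraT => xB.
have pBx : <<B>> \proper <<x |: B>>.
  rewrite properE genS ?subsetUr //=; apply: contra xB => sxB.
  by apply: (subsetP sxB); apply: mem_gen; rewrite setU11.
have h2 := card_proper_subgroup pBx.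
have Px : P (x |: B).
  rewrite /P subUset sub1set xG sBG /= cardsU1 (contra (@mem_gen _ x B) xB) expnS.
  by apply: leq_trans h2; rewrite leq_mul2l hB orbT.
have := ltn_Pmull (isT : 1 < 2)%N (cardG_gt0 <<B>>).
by rewrite ltnNge (leq_trans h2 (maxB _ Px)).
Qed.

(* An automorphism is determined by its values on a generating set B. *)
Lemma card_Aut_generated G (B : {set gT}) :
  B \subset G -> <<B>> = G -> (#|Aut G| <= #|G| ^ #|B|)%N.
Proof.
move=> sBG gBG.
pose restr (a : {perm gT}) : {ffun {x : gT | x \in B} -> gT} := [ffun x => a (val x)].
rewrite -(card_in_imset (f := restr)) => [|a b aA bA /= Eab]; last first.
  have eqB : {in B, a =1 b}.
    by move=> x xB; move/ffunP: Eab => /(_ (Sub x xB)); rewrite !ffunE.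
  pose E := Group (equalizer_group_set (autm aA) (autm bA)).
  have sGE : G \subset E.
    rewrite -gBG gen_subG; apply/subsetP=> x xB.
    by rewrite inE (subsetP sBG _ xB) !autmE; apply/eqP; apply: eqB.
  by apply: (eq_Aut aA bA) => x /(subsetP sGE); rewrite inE => /andP[_ /eqP].
rewrite -(card_sig (mem B)) -card_ffun_on; apply: subset_leq_card.
apply/subsetP => _ /imsetP[a aA ->]; apply/ffun_onP => x.
by rewrite ffunE (Aut_closed aA) // (subsetP sBG) // (valP x).
Qed.

End SubgroupCounting.

Lemma inv_eq_ord_le2 (gT : finGroupType) (x : gT) : (x^-1 == x) = (#[x] <= 2)%N.
Proof.
rewrite eq_invg_mul -expg2 -order_dvdn.
by case: #[x] (order_gt0 x) => [|[|[|k]]].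
Qed.

Section InversionOrbits.
Variables (gT : finGroupType) (p : {perm gT}).

Definition orbit_rel : rel gT := fun x y => [|| y == p x, y == p^-1 x | y == x^-1].

Lemma orbit_rel_sym : connect_sym orbit_rel.
Proof.
apply: sym_connect_sym => x y; apply/idP/idP; rewrite /orbit_rel => /or3P[] /eqP->;
  by rewrite ?permK ?permKV ?invgK eqxx ?orbT.
Qed.

Lemma closed_orbit_rel (a : {pred gT}) :
  (forall x, (p x \in a) = (x \in a)) -> (forall x, (x^-1 \in a) = (x \in a)) ->
  closed orbit_rel a.
Proof.
move=> pa ia x y; rewrite /orbit_rel; case/or3P=> /eqP->; rewrite ?pa ?ia //.
by rewrite -{1}(permKV p x) pa.
Qed.

Lemma invariant_closed (S : {set gT}) :
  p @: S = S -> S^-1 = S -> closed orbit_rel S.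
Proof.
move=> pS iS; apply: closed_orbit_rel => x; last by rewrite -mem_invg iS.
by rewrite -{1}pS (mem_imset _ _ perm_inj).
Qed.

End InversionOrbits.

Section AutomorphismOrbits.
Variables (gT : finGroupType) (A : {group gT}) (p : {perm gT}).
Hypothesis pA : p \in Aut A.

Let e := orbit_rel p.

Lemma aut_mem x : (p x \in A) = (x \in A).
Proof. by apply: perm_closed; case/setIdP: pA. Qed.

Lemma autV x : p x^-1 = (p x)^-1.
Proof.
have [xA|xA] := boolP (x \in A); first by rewrite -(autmE pA) morphV.
by rewrite !(out_Aut pA) // groupV.
Qed.

Lemma aut_order x : x \in A -> #[p x] = #[x].
Proof. by move=> xA; rewrite -(autmE pA) (order_injm (injm_autm pA)). Qed.

Definition invols : {set gT} := [set x in A | #[x] <= 2].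
Definition fixed : {set gT} := [set x in A | p x == x].
Definition inverted : {set gT} := [set x in A | p x == x^-1].
Definition generic : {set gT} := A :\: (fixed :|: inverted).

Lemma closed_A : closed e A.
Proof. by apply: closed_orbit_rel => x; rewrite ?aut_mem ?groupV. Qed.

Lemma closed_invols : closed e invols.
Proof.
apply: closed_orbit_rel => x; rewrite !inE ?aut_mem ?groupV ?orderV //.
by have [xA|//] := boolP (x \in A); rewrite aut_order.
Qed.

Lemma closed_fixed : closed e fixed.
Proof.
apply: closed_orbit_rel => x; rewrite !inE ?aut_mem ?groupV.
  by rewrite (inj_eq perm_inj).
by rewrite autV (inj_eq invg_inj).
Qed.

Lemma closed_inverted : closed e inverted.
Proof.
apply: closed_orbit_rel => x; rewrite !inE ?aut_mem ?groupV.
  by rewrite -autV (inj_eq perm_inj).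
by rewrite autV invgK eqg_invLR.
Qed.

(* 4 divided by a lower bound on the size of the component of x. *)
Definition weight (x : gT) : nat :=
  (if x \in invols then (if x \in fixed then 4 else 2)
   else if x \in generic then 1 else 2)%N.

Lemma weight_connect x y : connect e x y -> weight x = weight y.
Proof.
move=> cxy; rewrite /weight /generic !in_setD !in_setU.
rewrite (closed_connect closed_invols cxy) (closed_connect closed_fixed cxy).
by rewrite (closed_connect closed_inverted cxy) (closed_connect closed_A cxy).
Qed.

Lemma weight_bound x : (weight x + (x \in generic) <= 2 + 2 * (x \in invols))%N.
Proof.
rewrite /weight /generic in_setD in_setU.
by case: (x \in invols); case: (x \in fixed); case: (x \in inverted); case: (x \in A).
Qed.

Lemma orbit_contains j : let K := [set y | connect e j y] in
  [/\ j \in K, j^-1 \in K, p j \in K & (p j)^-1 \in K].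
Proof.
have ep y : e y (p y) by rewrite /e /orbit_rel eqxx.
have ei y : e y y^-1 by rewrite /e /orbit_rel eqxx !orbT.
rewrite /= !inE connect0 (connect1 (ei j)) (connect1 (ep j)).
by rewrite (connect_trans (connect1 (ep j)) (connect1 (ei _))).
Qed.

Lemma weight_orbit j : j \in A -> (4 <= #|[set y | connect e j y]| * weight j)%N.
Proof.
move=> jA; have [Kj Kij Kpj Kipj] := orbit_contains j.
have jF : (j \in fixed) = (p j == j) by rewrite inE jA.
have jV : (j \in inverted) = (p j == j^-1) by rewrite inE jA.
have jI : (j \in invols) = (j^-1 == j) by rewrite inE jA inv_eq_ord_le2.
have pjI : (j \in invols) = ((p j)^-1 == p j).
  by rewrite inE jA inv_eq_ord_le2 aut_order.
rewrite /weight; have [jinv|njinv] := boolP (j \in invols).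
  have [jfix|njfix] := boolP (j \in fixed).
    have sK : {subset [:: j] <= [set y | connect e j y]} by apply/allP; rewrite /= Kj.
    exact: leq_mul (uniq_size_le_card (s := [:: j]) isT sK) (leqnn 4).
  have sK : {subset [:: j; p j] <= [set y | connect e j y]}.
    by apply/allP; rewrite /= Kj Kpj.
  have us : uniq [:: j; p j] by rewrite /= inE andbT eq_sym -jF.
  exact: leq_mul (uniq_size_le_card us sK) (leqnn 2).
have nji : (j == j^-1) = false by apply/negbTE; rewrite eq_sym -jI.
have [jgen|njgen] := boolP (j \in generic); last first.
  have sK : {subset [:: j; j^-1] <= [set y | connect e j y]}.
    by apply/allP; rewrite /= Kj Kij.
  have us : uniq [:: j; j^-1] by rewrite /= inE andbT nji.
  exact: leq_mul (uniq_size_le_card us sK) (leqnn 2).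
move: jgen; rewrite /generic in_setD in_setU jA jF jV andbT negb_or.
case/andP=> /negbTE njp /negbTE njv.
have sK : {subset [:: j; j^-1; p j; (p j)^-1] <= [set y | connect e j y]}.
  by apply/allP; rewrite /= Kj Kij Kpj Kipj.
have us : uniq [:: j; j^-1; p j; (p j)^-1].
  rewrite /= !inE !andbT nji (eq_sym j) njp -eqg_invLR eq_sym njv.
  rewrite (inj_eq invg_inj) (eq_sym j) njp.
  by rewrite eq_sym -pjI (negbTE njinv).
exact: leq_mul (uniq_size_le_card us sK) (leqnn 1).
Qed.

Lemma fixed_group_set : group_set fixed.
Proof.
have -> : fixed = [set x in A | autm pA x == idm A x] by apply/setP=> x; rewrite !inE.
exact: equalizer_group_set.
Qed.

(* In an abelian group inversion is a morphism, so the inverted points form a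
   subgroup. *)
Lemma inverted_group_set : abelian A -> group_set inverted.
Proof.
move=> cAA; have invM : morphic A (fun x : gT => x^-1).
  apply/morphicP=> x y xA yA; rewrite invMg.
  by apply: (centsP cAA); rewrite groupV.
have -> : inverted = [set x in A | autm pA x == morphm invM x].
  by apply/setP=> x; rewrite !inE.
exact: equalizer_group_set.
Qed.

Lemma card_generic : abelian A -> p != 1 -> ~~ inv_perm_on A p ->
  (#|A| <= 4 * #|generic|)%N.
Proof.
move=> cAA p1 pinv.
have pF : Group fixed_group_set \proper A.
  rewrite properE; apply/andP; split; first by apply/subsetP=> x /setIdP[].
  apply: contra p1 => sAF; apply/eqP/(eq_Aut pA (group1 _)) => x /(subsetP sAF).
  by rewrite inE perm1 => /andP[_ /eqP].
have pV : Group (inverted_group_set cAA) \proper A.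
  rewrite properE; apply/andP; split; first by apply/subsetP=> x /setIdP[].
  by apply: contra pinv => sAV; apply/forall_inP=> x /(subsetP sAV) /setIdP[].
have U : (4 * #|fixed :|: inverted| <= 3 * #|A|)%N.
  exact: card_union_proper_subgroups pF pV.
have sUA : fixed :|: inverted \subset A by rewrite subUset !proper_sub.
rewrite /generic cardsD (setIidPr sUA).
(* lia treats the cardinalities as atoms only once they are generalized. *)
move: U (subset_leq_card sUA); move: #|A| #|fixed :|: inverted| => n u; lia.
Qed.

Lemma card_reps_le : abelian A -> p != 1 -> ~~ inv_perm_on A p ->
  (16 * #|reps e A| <= 7 * #|A| + 8 * num_ord_le2 A)%N.
Proof.
move=> cAA p1 pinv.
have count := reps_weighted_count (@orbit_rel_sym _ p) closed_A weight_connect weight_orbit.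
have wsum : (\sum_(x in A) weight x + #|generic| <= 2 * #|A| + 2 * #|invols|)%N.
  have sGA : generic \subset A by apply: subsetDl.
  have sIA : invols \subset A by apply/subsetP=> x /setIdP[].
  rewrite -(sum_indicator sGA) -big_split /=.
  apply: (@leq_trans (\sum_(x in A) (2 + 2 * (x \in invols)))%N).
    by apply: leq_sum => x _; apply: weight_bound.
  rewrite big_split /= sum_nat_const -big_distrr /=.
  by rewrite (sum_indicator sIA) mulnC.
have gen := card_generic cAA p1 pinv.
have -> : num_ord_le2 A = #|invols| by [].
move: count wsum gen; move: #|reps e A| (\sum_(x in A) weight x) #|generic| #|A| #|invols|.
lia.
Qed.

Definition invariant_sets : {set {set gT}} :=
  [set S : {set gT} | [&& S \subset A, S^-1 == S & p @: S == S]].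

Lemma card_invariant_sets : abelian A -> p != 1 -> ~~ inv_perm_on A p ->
  (#|invariant_sets| <= 2 ^ ((7 * #|A| + 8 * num_ord_le2 A) %/ 16))%N.
Proof.
move=> cAA p1 pinv.
apply: leq_trans (card_closed_subsets (@orbit_rel_sym _ p) closed_A _) _.
  move=> S; rewrite inE => /and3P[sSA /eqP iS /eqP pS]; split=> //.
  exact: invariant_closed.
by rewrite leq_pexp2l // leq_divRL // mulnC card_reps_le.
Qed.

End AutomorphismOrbits.

Local Close Scope group_scope.
Local Open Scope R_scope.

Lemma INR_leq (a b : nat) : (a <= b)%N -> INR a <= INR b.
Proof. by move/leP; apply: le_INR. Qed.

Lemma INR_expn (a b : nat) : INR (a ^ b) = INR a ^ b.
Proof. by elim: b => [|b IH] //; rewrite expnS -multE mult_INR IH. Qed.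

Lemma Rpower_log2 (x : R) : 0 < x -> Rpower 2 (log2 x) = x.
Proof.
move=> x0; have ln2 : 0 < ln 2 by rewrite -ln_1; apply: ln_increasing; lra.
by rewrite /Rpower /log2 /Rdiv Rmult_assoc Rinv_l ?Rmult_1_r ?exp_ln //; lra.
Qed.

Lemma le_log2 (k n : nat) : (2 ^ k <= n)%N -> INR k <= log2 (INR n).
Proof.
move=> hk; have n0 : 0 < INR n by apply/lt_0_INR/ltP; apply: leq_trans hk; rewrite expn_gt0.
apply: Rnot_lt_le => lt_log_k; move: (INR_leq hk); apply: Rlt_not_le.
rewrite INR_expn -Rpower_pow /=; last lra.
rewrite -{1}(Rpower_log2 n0) (_ : 1 + 1 = 2); last lra.
by apply: Rpower_lt; lra.
Qed.

(* The numerical part of the estimate: n^k = 2^(k log2 n) <= 2^((log2 n)^2)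
   and t <= 7n/16 + m/2 <= 11n/24 + m/2. *)
Lemma numeric_bound (N n m k t : nat) :
  (2 ^ k <= n)%N -> (16 * t <= 7 * n + 8 * m)%N -> (N <= n ^ k * 2 ^ t)%N ->
  INR N <= Rpower 2 (INR m / 2 + 11 * INR n / 24 + log2 (INR n) ^ 2).
Proof.
move=> hk ht hN.
have n0 : 0 < INR n by apply/lt_0_INR/ltP; apply: leq_trans hk; rewrite expn_gt0.
have kL := le_log2 hk.
have L0 : INR 0 <= log2 (INR n) by apply: le_log2; apply: leq_trans hk; rewrite expn_gt0.
have ht' : 16 * INR t <= 7 * INR n + 8 * INR m.
  have := INR_leq ht; rewrite -!multE -plusE plus_INR !mult_INR.
  by rewrite !INR_IZR_INZ.
apply: Rle_trans (INR_leq hN) _.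
have two0 : 0 < INR 2 by apply: lt_0_INR; lia.
rewrite -multE mult_INR !INR_expn -(Rpower_pow k _ n0) -(Rpower_pow t _ two0) /=.
rewrite -{1}(Rpower_log2 n0) Rpower_mult -Rpower_plus.
apply: Rle_Rpower; first by simpl; lra.
have := Rmult_le_compat_l _ _ _ L0 kL; rewrite /= in L0 *; lra.
Qed.

Local Close Scope R_scope.
Local Open Scope group_scope.

Theorem lemma5p5 (gT : finGroupType) (A : {group gT}) :
  abelian A -> (2 < exponent A)%N ->
  (INR #|special_sets A| <=
     Rpower 2 (INR (num_ord_le2 A) / 2 + 11 * INR #|A| / 24
               + (log2 (INR #|A|)) ^ 2))%R.
Proof.
move=> cAA _.
have [B [sBA gBA hB]] := small_generating_set A.
pose t := ((7 * #|A| + 8 * num_ord_le2 A) %/ 16)%N.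
pose P := [pred p | (p \in Aut A) && (p != 1) && ~~ inv_perm_on A p].
have cover : special_sets A \subset \bigcup_(p in P) invariant_sets A p.
  apply/subsetP=> S; rewrite inE => /and3P[sSA iS /exists_inP[p pA /and3P[p1 pinv pS]]].
  by apply/bigcupP; exists p; rewrite inE ?pA ?p1 ?pinv ?sSA ?iS.
have hS : (#|special_sets A| <= #|A| ^ #|B| * 2 ^ t)%N.
  apply: leq_trans (subset_leq_card cover) _; apply: leq_trans (card_bigcup_le _ _) _.
  apply: (@leq_trans (\sum_(p in P) 2 ^ t)%N).
    by apply: leq_sum => p /andP[/andP[pA p1] pinv]; apply: card_invariant_sets.
  rewrite sum_nat_const leq_mul2r (leq_trans _ (card_Aut_generated sBA gBA)) ?orbT //.
  by apply/subset_leq_card/subsetP=> p /andP[/andP[]].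
by apply: numeric_bound hB _ hS; rewrite mulnC leq_divM.
Qed.
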